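(* Let $k:\mathbb{R}\to\mathbb{R}$ be a nonnegative kernel that is symmetric, i.e. $k(-z)=k(z)$ for all $z$, with $E(k(\epsilon_1))<\infty$ and $E(|\epsilon_1|^2 k^r(\epsilon_1))<\infty$ for $r=1,2$. Let $n\ge 2$, $m\in\mathbb{R}$, and let $Y_i=m+\epsilon_i$, $i=1,\dots,n$, where $\epsilon_1,\dots,\epsilon_n$ are i.i.d., symmetrically distributed around $0$ (i.e. $\epsilon_1\stackrel{d}{=}-\epsilon_1$) with finite second moment. For $i=1,\dots,n$ define the vertically weighted average \[ \widehat{\mu}_n(Y_i)=\frac{\sum_{j\ne i} Y_j\,k(Y_j-Y_i)}{\sum_{j\ne i} k(Y_j-Y_i)}, \] the sums running over $j\in\{1,\dots,n\}\setminus\{i\}$. Then $\mathrm{Med}(\widehat{\mu}_n(Y_i))=m$ for every $i=1,\dots,n$.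
   Context: $\mathrm{Med}$ denotes the median of a random variable; $\stackrel{d}{=}$ denotes equality in distribution. In particular $\widehat{\mu}_n(Y_n)=\sum_{j\le n-1}Y_j k(Y_j-Y_n)/\sum_{j\le n-1}k(Y_j-Y_n)$. *)

From HB Require Import structures.
From mathcomp Require Import all_boot all_order all_algebra.
From mathcomp Require Import all_classical all_reals all_analysis.
Set Implicit Arguments. Unset Strict Implicit. Unset Printing Implicit Defensive.
Import Order.TTheory GRing.Theory Num.Theory.
Local Open Scope classical_set_scope.
Local Open Scope ring_scope.

Section Defs.
Context {d : measure_display} {T : measurableType d} {R : realType}.

(* Mutual independence of X_0, ..., X_(n-1): product rule for every family of
   Borel sets (taking B i = setT recovers every subfamily). *)
Definition mutually_independent (P : probability T R) (n : nat)
    (X : nat -> T -> R) : Prop :=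
  forall B : nat -> set R, (forall i, measurable (B i)) ->
    P (\bigcap_(i in `I_n) (X i @^-1` B i)) = (\prod_(i < n) P (X i @^-1` B i))%E.

Definition identically_distributed (P : probability T R) (n : nat)
    (X : nat -> T -> R) : Prop :=
  forall i, (i < n)%N -> forall B : set R, measurable B ->
    P (X i @^-1` B) = P (X 0%N @^-1` B).

Definition symmetric_rv (P : probability T R) (X : T -> R) : Prop :=
  forall B : set R, measurable B ->
    P (X @^-1` B) = P ((fun x => - X x) @^-1` B).

Definition cond_median (P : probability T R) (D : set T) (X : T -> R) (c : R)
    : Prop :=
  (P D <= 2%:E * P (D `&` [set x | (X x <= c)%R]))%E /\
  (P D <= 2%:E * P (D `&` [set x | (c <= X x)%R]))%E.

Definition is_median (P : probability T R) (X : T -> R) (c : R) : Prop :=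
  cond_median P setT X c.

End Defs.

Definition vwa_den {R : realType} (n : nat) (k : R -> R) (Y : nat -> R) (i : nat)
    : R :=
  \sum_(0 <= j < n | j != i) k (Y j - Y i).

Definition vwa {R : realType} (n : nat) (k : R -> R) (Y : nat -> R) (i : nat)
    : R :=
  (\sum_(0 <= j < n | j != i) Y j * k (Y j - Y i)) / vwa_den n k Y i.

(* The joint law of (eps_0, ..., eps_(n-1)) is invariant under eps |-> -eps:
   by independence, identical distribution and symmetry of eps_0 the two laws
   agree on Borel rectangles, hence on the whole product sigma-algebra by
   uniqueness of measures. Write mu_n(Y_i) - m = N(eps) / D(eps); as k is
   even, D(-eps) = D(eps) and N(-eps) = -N(eps), so on {D > 0} the events
   {mu_n(Y_i) <= m} and {mu_n(Y_i) >= m} have the same probability. They cover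
   {D > 0}, so each carries at least half of its mass. *)

From HB Require Import structures.
From mathcomp Require Import all_boot all_order all_algebra.
From mathcomp Require Import all_classical all_reals all_analysis.
From mathcomp Require Import ring.
Import Order.TTheory GRing.Theory Num.Theory.
Local Open Scope classical_set_scope.
Local Open Scope ring_scope.

Definition vwa_num {R : realType} (n : nat) (k : R -> R) (Y : nat -> R)
    (i : nat) : R :=
  \sum_(0 <= j < n | j != i) Y j * k (Y j - Y i).

Section vwa_algebra.
Variables (R : realType) (n : nat) (k : R -> R) (i : nat).
Implicit Types (Y : nat -> R) (m : R).

Lemma vwa_den_translate m Y :
  vwa_den n k (fun j => m + Y j) i = vwa_den n k Y i.
Proof. by apply: eq_bigr => j _; congr k; ring. Qed.

Lemma vwa_num_translate m Y :
  vwa_num n k (fun j => m + Y j) i = m * vwa_den n k Y i + vwa_num n k Y i.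
Proof.
rewrite mulr_sumr -big_split; apply: eq_bigr => j _ /=.
by rewrite (_ : m + Y j - (m + Y i) = Y j - Y i); ring.
Qed.

Lemma vwa_translate_le m Y : 0 < vwa_den n k Y i ->
  (vwa n k (fun j => m + Y j) i <= m) = (vwa_num n k Y i <= 0).
Proof.
move=> den_gt0; rewrite /vwa -/(vwa_num _ _ _ _) vwa_num_translate.
by rewrite vwa_den_translate ler_pdivrMr // -subr_le0 addrAC mulrC subrr add0r.
Qed.

Lemma vwa_translate_ge m Y : 0 < vwa_den n k Y i ->
  (m <= vwa n k (fun j => m + Y j) i) = (0 <= vwa_num n k Y i).
Proof.
move=> den_gt0; rewrite /vwa -/(vwa_num _ _ _ _) vwa_num_translate.
by rewrite vwa_den_translate ler_pdivlMr // -subr_ge0 addrAC mulrC subrr add0r.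
Qed.

Hypothesis k_even : forall z, k (- z) = k z.

Lemma vwa_den_opp Y : vwa_den n k (fun j => - Y j) i = vwa_den n k Y i.
Proof. by apply: eq_bigr => j _; rewrite -opprD k_even. Qed.

Lemma vwa_num_opp Y : vwa_num n k (fun j => - Y j) i = - vwa_num n k Y i.
Proof.
by rewrite -sumrN; apply: eq_bigr => j _; rewrite -opprD k_even mulNr.
Qed.

End vwa_algebra.

Lemma cond_median_balanced d (T : measurableType d) (R : realType)
    (P : probability T R) (D : set T) (X : T -> R) (c : R) :
  measurable (D `&` [set x | X x <= c]) ->
  measurable (D `&` [set x | c <= X x]) ->
  P (D `&` [set x | X x <= c]) = P (D `&` [set x | c <= X x]) ->
  cond_median P D X c.
Proof.
move=> mle mge Peq.
have DU : D = (D `&` [set x | X x <= c]) `|` (D `&` [set x | c <= X x]).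
  by rewrite -setIUr; apply/esym/setIidl => x _; apply/orP; exact: le_total.
have le2 : (P D <= 2%:E * P (D `&` [set x | (X x <= c)%R]))%E.
  by rewrite mule_natl mule2n {1}DU {2}Peq; exact: measureU2.
by split => //; rewrite -Peq.
Qed.

(* A copy of [nat -> R] with a base point, as [g_sigma_algebraType] requires. *)
Definition vec (R : realType) := nat -> R.
HB.instance Definition _ (R : realType) := Choice.on (vec R).
HB.instance Definition _ (R : realType) := isPointed.Build (vec R) (fun=> 0).

Section rectangles.
Variables (R : realType) (n : nat).

Definition rectangles : set (set (vec R)) :=
  [set A | exists B : nat -> set R, (forall j, measurable (B j)) /\
     A = [set f | forall j, (j < n)%N -> B j (f j)]].

Local Notation vecn := (g_sigma_algebraType rectangles).

Lemma rectangles_setI_closed : setI_closed rectangles.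
Proof.
move=> _ _ [B1 [mB1 ->]] [B2 [mB2 ->]].
exists (fun j => B1 j `&` B2 j); split => [j|]; first exact: measurableI.
apply/seteqP; split => f /=.
  by move=> [f1 f2] j jn; split; [exact: f1|exact: f2].
by move=> f12; split => j /f12 [].
Qed.

Lemma rectanglesT : rectangles setT.
Proof. by exists (fun=> setT); split => //; apply/seteqP; split. Qed.

Lemma measurable_coord j :
  (j < n)%N -> measurable_fun setT (fun f : vecn => f j).
Proof.
move=> jn _ B mB; rewrite setTI; apply: sub_sigma_algebra.
exists (fun l => if l == j then B else setT); split => [l|]; first by case: eqP.
apply/seteqP; split => [f Bf l _|f Bf /=]; first by case: eqP => // ->.
by have := Bf j jn; rewrite eqxx.
Qed.

Lemma measurable_sum_neq (i : nat) (F : nat -> vecn -> R) :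
  (forall j, (j < n)%N -> measurable_fun setT (F j)) ->
  measurable_fun setT (fun f => \sum_(0 <= j < n | j != i) F j f).
Proof.
move=> mF; under eq_fun do rewrite big_mkord big_mkcond /=.
apply: measurable_sum => j; case: (j != i :> nat); last exact: measurable_cst.
exact: mF.
Qed.

Variables (k : R -> R) (i : nat).
Hypotheses (mk : measurable_fun setT k) (i_lt_n : (i < n)%N).

Let measurable_kernel_diff j : (j < n)%N ->
  measurable_fun setT (fun f : vecn => k (f j - f i)).
Proof.
move=> jn; apply: measurableT_comp => //.
by apply: measurable_realfun.measurable_funB; exact: measurable_coord.
Qed.

Lemma measurable_vwa_den :
  measurable_fun setT (fun f : vecn => vwa_den n k f i).
Proof. by apply: measurable_sum_neq => j jn; exact: measurable_kernel_diff. Qed.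

Lemma measurable_vwa_num :
  measurable_fun setT (fun f : vecn => vwa_num n k f i).
Proof.
apply: measurable_sum_neq => j jn; apply: measurable_realfun.measurable_funM.
  exact: measurable_coord.
exact: measurable_kernel_diff.
Qed.

Definition vwa_nonpos : set vecn :=
  (fun f => vwa_den n k f i) @^-1` `]0, +oo[ `&`
  (fun f => vwa_num n k f i) @^-1` `]-oo, 0].

Definition vwa_nonneg : set vecn :=
  (fun f => vwa_den n k f i) @^-1` `]0, +oo[ `&`
  (fun f => vwa_num n k f i) @^-1` `[0, +oo[.

Let measurable_preimage_itv (g : vecn -> R) (I : interval R) :
  measurable_fun setT g -> measurable (g @^-1` [set` I]).
Proof.
by move=> mg; rewrite -[X in measurable X]setTI; exact: mg (measurable_itv I).
Qed.

Lemma measurable_vwa_nonpos : measurable vwa_nonpos.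
Proof.
apply: measurableI; apply: measurable_preimage_itv;
  [exact: measurable_vwa_den|exact: measurable_vwa_num].
Qed.

Lemma measurable_vwa_nonneg : measurable vwa_nonneg.
Proof.
apply: measurableI; apply: measurable_preimage_itv;
  [exact: measurable_vwa_den|exact: measurable_vwa_num].
Qed.

End rectangles.
Arguments vwa_nonpos {R} n k i.
Arguments vwa_nonneg {R} n k i.

Section joint_law.
Context {d : measure_display} {T : measurableType d} {R : realType}.
Variables (P : probability T R) (n : nat).
Local Notation vecn := (g_sigma_algebraType (rectangles R n)).

Definition joint (X : nat -> T -> R) : T -> vecn := fun x j => X j x.

Lemma joint_preimage_rectangle X B :
  joint X @^-1` [set f | forall j, (j < n)%N -> B j (f j)] =
  \bigcap_(j in `I_n) (X j @^-1` B j).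
Proof. by apply/seteqP; split => x /= Bx j /= jn; exact: Bx. Qed.

Lemma measurable_joint X :
  (forall j, (j < n)%N -> measurable_fun setT (X j)) ->
  measurable_fun setT (joint X).
Proof.
move=> mX; apply: (@measurability _ _ _ vecn _ _ (rectangles R n) erefl).
move=> _ [_ [B [mB ->]] <-]; rewrite setTI joint_preimage_rectangle.
apply: fin_bigcap_measurable => [|j jn]; first exact: finite_II.
by rewrite -[X in measurable X]setTI; exact: mX.
Qed.

Lemma measurable_preimage_joint X A :
  (forall j, (j < n)%N -> measurable_fun setT (X j)) ->
  measurable A -> measurable (joint X @^-1` A).
Proof.
by move=> /measurable_joint mX mA; rewrite -[X in measurable X]setTI; exact: mX.
Qed.

Lemma eq_joint_law X Y :
  (forall j, (j < n)%N -> measurable_fun setT (X j)) ->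
  (forall j, (j < n)%N -> measurable_fun setT (Y j)) ->
  (forall B : nat -> set R, (forall j, measurable (B j)) ->
     P (\bigcap_(j in `I_n) (X j @^-1` B j)) =
     P (\bigcap_(j in `I_n) (Y j @^-1` B j))) ->
  forall A : set vecn, measurable A ->
    P (joint X @^-1` A) = P (joint Y @^-1` A).
Proof.
move=> /measurable_joint mX /measurable_joint mY XY.
pose jX : {mfun T >-> vecn} :=
  HB.pack (joint X) (isMeasurableFun.Build _ _ _ _ _ mX).
pose jY : {mfun T >-> vecn} :=
  HB.pack (joint Y) (isMeasurableFun.Build _ _ _ _ _ mY).
move=> A mA; apply: (@measure_unique _ R vecn (rectangles R n) (fun=> setT)
  erefl (@rectangles_setI_closed R n) (fun=> rectanglesT R n) _
  (distribution P jX) (distribution P jY) _ _ A mA).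
- by rewrite bigcup_const //; exists 0%N.
- move=> _ [B [mB ->]]; have := XY B mB.
  by rewrite -!joint_preimage_rectangle.
- by move=> _ /=; rewrite probability_setT ltry.
Qed.

Lemma joint_law_opp eps :
  (forall j, (j < n)%N -> measurable_fun setT (eps j)) ->
  mutually_independent P n eps -> identically_distributed P n eps ->
  symmetric_rv P (eps 0%N) ->
  forall A : set vecn, measurable A ->
    P (joint eps @^-1` A) = P (joint (fun j x => - eps j x) @^-1` A).
Proof.
move=> meps ind idd sym; apply: eq_joint_law => // [j jn|B mB].
  by apply: measurableT_comp => //; exact: meps.
have mNB j : measurable (-%R @^-1` B j).
  rewrite -[X in measurable X]setTI.
  exact: measurable_realfun.oppr_measurable.
rewrite ind // [RHS](ind (fun j => -%R @^-1` B j)) //.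
by apply: eq_bigr => j _; rewrite idd // [RHS]idd // sym.
Qed.

End joint_law.

Theorem theorem2 (d : measure_display) (T : measurableType d) (R : realType)
    (P : probability T R) (k : R -> R) (n : nat) (m : R)
    (eps : nat -> T -> R) :
  measurable_fun setT k ->
  (forall z, 0 <= k z) ->
  (forall z, k (- z) = k z) ->
  (2 <= n)%N ->
  (forall i, (i < n)%N -> measurable_fun setT (eps i)) ->
  mutually_independent P n eps ->
  identically_distributed P n eps ->
  symmetric_rv P (eps 0%N) ->
  (\int[P]_x ((eps 0%N x) ^+ 2)%:E < +oo)%E ->
  (\int[P]_x (k (eps 0%N x))%:E < +oo)%E ->
  (forall r : nat, (r = 1 \/ r = 2)%N ->
     (\int[P]_x (`|eps 0%N x| ^+ 2 * k (eps 0%N x) ^+ r)%:E < +oo)%E) ->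
  forall i : nat, (i < n)%N ->
    cond_median P
      [set x | 0 < vwa_den n k (fun j => m + eps j x) i]
      (fun x => vwa n k (fun j => m + eps j x) i) m.
Proof.
move=> mk _ k_even _ meps ind idd sym _ _ _ i i_lt_n.
set D := [set x | _].
have Dle : D `&` [set x | vwa n k (fun j => m + eps j x) i <= m] =
    joint n eps @^-1` vwa_nonpos n k i.
  apply/seteqP; split => x;
    rewrite /D /vwa_nonpos /joint /= !in_itv /= andbT vwa_den_translate;
    by move=> [den_gt0]; rewrite vwa_translate_le.
have Dge : D `&` [set x | m <= vwa n k (fun j => m + eps j x) i] =
    joint n eps @^-1` vwa_nonneg n k i.
  apply/seteqP; split => x;
    rewrite /D /vwa_nonneg /joint /= !in_itv /= !andbT vwa_den_translate;
    by move=> [den_gt0]; rewrite vwa_translate_ge.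
have nonpos_opp : joint n (fun j x => - eps j x) @^-1` vwa_nonpos n k i =
    joint n eps @^-1` vwa_nonneg n k i.
  apply/seteqP; split => x;
    rewrite /vwa_nonpos /vwa_nonneg /joint /= !in_itv /= !andbT;
    by rewrite vwa_den_opp // vwa_num_opp // oppr_le0.
apply: cond_median_balanced; rewrite ?Dle ?Dge.
- by apply: measurable_preimage_joint => //; exact: measurable_vwa_nonpos.
- by apply: measurable_preimage_joint => //; exact: measurable_vwa_nonneg.
- rewrite -nonpos_opp; apply: joint_law_opp => //.
  exact: measurable_vwa_nonpos.
Qed.
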